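(* Let $R = R_1\times\cdots\times R_t$ be a finite commutative ring with identity, where each $R_i$ is a local ring. Then the involutory Cayley graph $\Gamma(R)$ is connected if and only if at most one of the factors $R_i$ has even order, that factor (if it exists) has connected involutory Cayley graph $\Gamma(R_i)$, and every other factor $R_j$ is isomorphic to $\mathbb{Z}_{p_j^{n_j}}$ for some odd prime $p_j$ and positive integer $n_j$.
   Context: All rings are finite, commutative, with nonzero identity. An element $u$ of a ring $R$ is an involution if $u^2=1$; $\mathrm{Inv}(R)$ denotes the set of involutions. The involutory Cayley graph $\Gamma(R)$ is the simple undirected graph with vertex set $R$ in which distinct $x,y$ are adjacent iff $(x-y)^2=1$, i.e. the Cayley graph of $(R,+)$ with respect to $\mathrm{Inv}(R)$; it is $|\mathrm{Inv}(R)|$-regular. *)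

From HB Require Import structures.
From mathcomp Require Import all_boot all_order all_algebra.
Set Implicit Arguments. Unset Strict Implicit. Unset Printing Implicit Defensive.
Import GRing.Theory.
Local Open Scope ring_scope.

Definition involution (R : comNzRingType) (u : R) : bool := u ^+ 2 == 1.

Definition inv_cayley_rel (R : finComNzRingType) : rel R :=
  fun x y => (x != y) && involution (x - y).

Definition gamma_connected (R : finComNzRingType) : Prop :=
  forall x y : R, connect (@inv_cayley_rel R) x y.

Definition is_ideal (R : finComNzRingType) (I : {set R}) : Prop :=
  [/\ 0 \in I,
      forall x y, x \in I -> y \in I -> x - y \in I
    & forall r x, x \in I -> r * x \in I].

Definition is_maximal_ideal (R : finComNzRingType) (M : {set R}) : Prop :=
  [/\ is_ideal M, (1 \notin M)
    & forall J : {set R}, is_ideal J -> M \subset J -> J = M \/ 1 \in J].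

Definition local_ring (R : finComNzRingType) : Prop :=
  exists M : {set R}, is_maximal_ideal M /\
    forall N : {set R}, is_maximal_ideal N -> N = M.

Definition ring_iso (R S : finComNzRingType) : Prop :=
  exists f : {rmorphism R -> S}, bijective f.

(* R is (isomorphic to) the product of the R_ i, via the projections pi i:
   the map x |-> (pi i x)_i is a bijective ring morphism onto the product. *)
Definition is_product_via (R : finComNzRingType) (t : nat)
    (R_ : 'I_t -> finComNzRingType) (pi : forall i, {rmorphism R -> R_ i}) : Prop :=
  (forall x y : R, (forall i, pi i x = pi i y) -> x = y) /\
  (forall y : forall i, R_ i, exists x : R, forall i, pi i x = y i).

From HB Require Import structures.
From mathcomp Require Import all_boot all_order all_algebra all_fingroup all_solvable.
From mathcomp Require Import ring zify.
Set Implicit Arguments. Unset Strict Implicit. Unset Printing Implicit Defensive.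
Import GRing.Theory FinRing.Theory.
Local Open Scope ring_scope.

(* Gamma(R) is connected iff the involutions generate (R, +), and in a product
   this can be tested on the elements [embed w] supported on a single factor.
   In a local factor of odd order the only involutions are 1 and -1, so they
   generate the prime subring, which is everything only when the factor is
   Z/m with m its characteristic; locality makes m a prime power.  In a local
   factor of even order every involution is 1 modulo the maximal ideal, so
   with two even factors the residues 0/1 of the two components agree on the
   span of the involutions but not on the idempotent of one factor.
   Conversely, 1 - (1,..,-1,..,1) = 2 e_j with 2 a unit puts every cyclic
   odd factor in the span, and then involutions of the even factor, padded
   with 1 elsewhere, put that factor in the span as well. *)

Section FinZmodule.
Variable V : finZmodType.

Lemma mulrn_eq0_order (x : V) n : (x *+ n == 0) = (#[x]%g %| n)%N.
Proof. by rewrite order_dvdn zmodXgE. Qed.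

Lemma mulrn_mod_order (x : V) n : x *+ (n %% #[x]%g) = x *+ n.
Proof.
have x_order : x *+ #[x]%g = 0 by apply/eqP; rewrite mulrn_eq0_order.
by rewrite [in RHS](divn_eq n #[x]%g) mulrnDr mulnC mulrnA x_order mul0rn add0r.
Qed.

Lemma addr_closedMn (A : {pred V}) x n : addr_closed A -> x \in A -> x *+ n \in A.
Proof.
by case=> A0 AD Ax; elim: n => [|n IHn]; rewrite ?mulr0n // mulrS AD.
Qed.

Lemma addr_closedN (A : {pred V}) x : addr_closed A -> x \in A -> - x \in A.
Proof.
move=> cA Ax; have -> : - x = x *+ (#[x]%g).-1.
  apply/eqP; rewrite eq_sym -subr_eq0 opprK -mulrSr prednK ?order_gt0 //.
  by rewrite mulrn_eq0_order.
exact: addr_closedMn.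
Qed.

End FinZmodule.

Section InvolutoryCayleyGraph.
Variable R : finComNzRingType.

Definition involutions : {set R} := [set u | involution u].

Lemma involutionN (u : R) : involution (- u) = involution u.
Proof. by rewrite /involution sqrrN. Qed.

Lemma involution1 : involution (1 : R).
Proof. by rewrite /involution expr1n. Qed.

Lemma involution_neq0 (u : R) : involution u -> u != 0.
Proof. by apply: contraTneq => ->; rewrite /involution expr0n eq_sym oner_eq0. Qed.

Lemma inv_cayley_relE (x y : R) : inv_cayley_rel x y = involution (y - x).
Proof.
rewrite /inv_cayley_rel -involutionN opprB andb_idl // => /involution_neq0.
by apply: contraNneq => ->; rewrite subrr.
Qed.

Lemma gamma_connectedP :
  gamma_connected R <->
  (forall A : {set R}, addr_closed A -> involutions \subset A -> A = [set: R]).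
Proof.
split=> [conR A [A0 AD] /subsetP invA | genR x y].
  apply/setP=> z; rewrite inE -(closed_connect _ (conR 0 z)) //.
  move=> a b; rewrite inv_cayley_relE => uab.
  have uba : involution (a - b) by rewrite -involutionN opprB.
  apply/idP/idP=> [Aa | Ab].
    by rewrite -(subrK a b) AD // invA ?inE.
  by rewrite -(subrK b a) AD // invA ?inE.
pose A := [set z | [forall v, connect (@inv_cayley_rel R) v (v + z)]].
have cA : addr_closed A.
  split=> [|a b]; rewrite !inE.
    by apply/forallP=> v; rewrite addr0 connect0.
  move=> /forallP Aa /forallP Ab; apply/forallP=> v.
  by rewrite addrA (connect_trans (Aa v) (Ab (v + a))).
have invA : involutions \subset A.
  apply/subsetP=> u; rewrite !inE => iu; apply/forallP=> v.
  by apply: connect1; rewrite inv_cayley_relE addrC addKr.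
have /setP/(_ (y - x)) := genR A cA invA.
by rewrite !inE => /forallP/(_ x); rewrite addrC subrK.
Qed.

End InvolutoryCayleyGraph.

Lemma rmorph_involution (R S : finComNzRingType) (f : {rmorphism R -> S}) u :
  involution u -> involution (f u).
Proof. by rewrite /involution -rmorphXn => /eqP ->; rewrite rmorph1. Qed.

Lemma gamma_connected_rmorph (R S : finComNzRingType) (f : {rmorphism R -> S}) :
  (forall y, exists x, f x = y) -> gamma_connected R -> gamma_connected S.
Proof.
move=> fsurj /gamma_connectedP genR; apply/gamma_connectedP => A [A0 AD] invA.
pose B := [set x | f x \in A].
have cB : addr_closed B.
  by split=> [|a b]; rewrite !inE ?rmorph0 // rmorphD; apply: AD.
have invB : involutions R \subset B.
  apply/subsetP=> u; rewrite !inE => iu.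
  by apply: (subsetP invA); rewrite inE rmorph_involution.
apply/setP=> y; have [x <-] := fsurj y.
by have /setP/(_ x) := genR B cB invB; rewrite !inE.
Qed.

Section Units.
Variable R : finComNzRingType.

Definition invertible (x : R) : bool := [exists y, x * y == 1].

Definition nonunits : {set R} := [set x | ~~ invertible x].

Lemma invertibleP x : reflect (exists y, x * y = 1) (invertible x).
Proof. by apply: (iffP existsP) => [] [y /eqP]; exists y. Qed.

Lemma invertible1 : invertible 1.
Proof. by apply/invertibleP; exists 1; rewrite mulr1. Qed.

Lemma invertibleN1 : invertible (-1).
Proof. by apply/invertibleP; exists (-1); rewrite mulrNN mulr1. Qed.

Lemma invertibleMl x y : invertible (x * y) -> invertible x.
Proof. by case/invertibleP=> z xyz; apply/invertibleP; exists (y * z); rewrite mulrA. Qed.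

Lemma invertibleM x y : invertible x -> invertible y -> invertible (x * y).
Proof.
case/invertibleP=> x' xx' /invertibleP[y' yy']; apply/invertibleP; exists (x' * y').
by rewrite mulrACA xx' yy' mulr1.
Qed.

Lemma invertible_mulr_eq0 x y : invertible x -> x * y = 0 -> y = 0.
Proof. by case/invertibleP=> z xz xy0; rewrite -[y]mul1r -xz mulrAC xy0 mul0r. Qed.

Lemma invertible_regular x : (forall y, x * y = 0 -> y = 0) -> invertible x.
Proof.
move=> xreg; have xinj : injective (fun y => x * y).
  move=> a b eab; apply/eqP; rewrite -subr_eq0; apply/eqP/xreg.
  by rewrite mulrBr eab subrr.
have [g _ gK] := injF_bij xinj.
by apply/invertibleP; exists (g 1); rewrite gK.
Qed.

Lemma invertible2E : invertible 2 = odd #|R|.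
Proof.
apply/idP/idP => [two_unit | oddR].
  apply: contraLR two_unit; rewrite -dvdn2 -cardsT => /(Cauchy (isT : prime 2)).
  case=> y _ oy; apply/negP=> two_unit.
  have y0 : y = 0.
    by apply: (invertible_mulr_eq0 two_unit); apply/eqP; rewrite mulr_natl mulrn_eq0_order oy.
  by move: oy; rewrite y0 -zmod1gE order1.
apply: invertible_regular => y y2; apply/eqP; rewrite -order_eq1.
have : odd #[y]%g by apply: dvdn_odd oddR; rewrite -cardsT order_dvdG ?inE.
have : (#[y]%g %| 2)%N by rewrite -mulrn_eq0_order -mulr_natl y2.
by case: #[y]%g (order_gt0 y) => [|[|[|k]]] // _ /dvdn_leq.
Qed.

(* A boolean form of [is_ideal], so that ideals can be maximized by cardinality. *)
Definition idealb (I : {set R}) : bool :=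
  [&& 0 \in I, [forall x, forall y, (x \in I) ==> (y \in I) ==> (x - y \in I)]
    & [forall r, forall x, (x \in I) ==> (r * x \in I)]].

Lemma idealbP I : reflect (is_ideal I) (idealb I).
Proof.
apply: (iffP and3P) => [[I0 /forallP IB /forallP IM] | [I0 IB IM]]; split=> //.
- by move=> x y xI yI; move/forallP/(_ y): (IB x); rewrite xI yI.
- by move=> r x xI; move/forallP/(_ x): (IM r); rewrite xI.
- by apply/forallP=> x; apply/forallP=> y; apply/implyP=> xI; apply/implyP; apply: IB.
- by apply/forallP=> r; apply/forallP=> x; apply/implyP; apply: IM.
Qed.

(* An ideal of maximal size among the proper ideals containing [x] is maximal. *)
Lemma nonunit_maximal x :
  ~~ invertible x -> exists M, is_maximal_ideal M /\ x \in M.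
Proof.
move=> xN; pose proper_over J := [&& idealb J, x \in J & 1 \notin J].
have xR_proper : proper_over [set x * r | r : R].
  apply/and3P; split.
  - apply/idealbP; split=> [|_ _ /imsetP[r _ ->] /imsetP[s _ ->]|a _ /imsetP[r _ ->]].
    + by apply/imsetP; exists 0; rewrite // mulr0.
    + by apply/imsetP; exists (r - s); rewrite // mulrBr.
    + by apply/imsetP; exists (a * r); rewrite // mulrCA.
  - by apply/imsetP; exists 1; rewrite // mulr1.
  - by apply/negP=> /imsetP[r _ xr1]; move/invertibleP: xN; apply; exists r.
have [M /and3P[/idealbP iM xM n1M] Mmax] := arg_maxnP (fun J : {set R} => #|J|) xR_proper.
exists M; split=> //; split=> // J iJ sMJ; have [|n1J] := boolP (1 \in J); first by right.
left; apply/eqP; rewrite eq_sym eqEcard sMJ; apply: Mmax.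
by apply/and3P; split=> //; [apply/idealbP | apply: (subsetP sMJ)].
Qed.

Lemma local_nonunits_ideal : local_ring R -> is_ideal nonunits.
Proof.
case=> M [[iM n1M _] Muniq]; suff -> : nonunits = M by [].
apply/setP=> x; rewrite inE; apply/idP/idP => [xN | xM].
  by have [N [Nmax xN']] := nonunit_maximal xN; rewrite -(Muniq N Nmax).
apply: contra n1M => /invertibleP[y xy1].
by case: iM => _ _ /(_ y x xM); rewrite mulrC xy1.
Qed.

End Units.

Section Characteristic.
Variable R : finComNzRingType.

Definition characteristic : nat := #[1%R : R]%g.

Lemma natr_eq0_char n : (n%:R == 0 :> R) = (characteristic %| n)%N.
Proof. exact: mulrn_eq0_order. Qed.

Lemma natr_mod_char n : ((n %% characteristic)%:R : R) = n%:R.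
Proof. exact: mulrn_mod_order. Qed.

Lemma characteristic_gt1 : (1 < characteristic)%N.
Proof.
rewrite ltn_neqAle order_gt0 andbT eq_sym order_eq1.
by rewrite -[1%g]/(0 : R) oner_neq0.
Qed.

Lemma char_dvdn_nonunit d :
  (1 < d)%N -> (d %| characteristic)%N -> ~~ invertible (d%:R : R).
Proof.
move=> d_gt1 /dvdnP[k charE]; apply/negP=> /invertibleP[y dy1].
have kd0 : (k%:R * d%:R : R) = 0 by rewrite -natrM -charE; apply/eqP; rewrite natr_eq0_char.
have k0 : (k%:R : R) = 0.
  by apply: (@invertible_mulr_eq0 _ d%:R); [apply/invertibleP; exists y | rewrite mulrC].
have k_gt0 : (0 < k)%N by move: characteristic_gt1; rewrite charE; case: (k).
move/eqP: k0; rewrite natr_eq0_char charE => /(dvdn_leq k_gt0); nia.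
Qed.

End Characteristic.

Section LocalRing.
Variable R : finComNzRingType.
Hypothesis R_local : local_ring R.

Lemma local_nonunitB x y :
  x \in nonunits R -> y \in nonunits R -> x - y \in nonunits R.
Proof. by case: (local_nonunits_ideal R_local) => _ + _; apply. Qed.

Lemma local_nonunitD x y :
  x \in nonunits R -> y \in nonunits R -> x + y \in nonunits R.
Proof.
case: (local_nonunits_ideal R_local) => N0 _ _ xN yN.
by have := local_nonunitB xN (local_nonunitB N0 yN); rewrite sub0r opprK.
Qed.

Lemma local_nonunitMl r x : x \in nonunits R -> r * x \in nonunits R.
Proof. by case: (local_nonunits_ideal R_local) => _ _; apply. Qed.

(* The factors of (u - 1)(u + 1) = 0 differ by the unit 2, so one is a unit. *)
Lemma local_odd_involution (u : R) : odd #|R| -> involution u -> u = 1 \/ u = -1.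
Proof.
move=> oddR /eqP u2; have u1u1 : (u - 1) * (u + 1) = 0.
  by rewrite mulrDr mulr1 mulrBl mul1r -expr2 u2 subrKA subrr.
have [um1 | um1N] := boolP (invertible (u - 1)).
  by right; apply/eqP; rewrite -subr_eq0 opprK (invertible_mulr_eq0 um1 u1u1).
have [up1 | up1N] := boolP (invertible (u + 1)).
  by left; apply/eqP; rewrite -subr_eq0; apply/eqP/(invertible_mulr_eq0 up1); rewrite mulrC.
suff : (2 : R) \in nonunits R by rewrite inE invertible2E oddR.
have -> : (2 : R) = u + 1 - (u - 1) by ring.
by rewrite local_nonunitB ?inE.
Qed.

(* Two distinct primes dividing the characteristic would write 1, by Bezout, as
   a combination of the nonunits p and q. *)
Lemma local_char_pnat : (pdiv (characteristic R)).-nat (characteristic R).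
Proof.
have char_gt1 := characteristic_gt1 R; set m := characteristic R in char_gt1 *.
apply/pnatP=> [|q q_pr q_dvd]; first exact: ltnW.
set p := pdiv m; have p_pr : prime p := pdiv_prime char_gt1.
rewrite inE; apply: contraT => neq_qp.
have [a _] := Bezoutl q (prime_gt0 p_pr).
have /eqP -> : gcdn p q == 1%N by rewrite -/(coprime p q) prime_coprime // dvdn_prime2 // eq_sym.
case/dvdnP=> b pb; suff : (1 : R) \in nonunits R by rewrite inE invertible1.
have -> : (1 : R) = b%:R * p%:R - a%:R * q%:R by rewrite -!natrM -pb natrD addrK.
by rewrite local_nonunitB // local_nonunitMl // inE char_dvdn_nonunit ?prime_gt1 ?pdiv_dvd.
Qed.

(* [x] is congruent to [b] modulo the maximal ideal, which is [nonunits R]. *)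
Definition residue_is (x : R) (b : bool) : bool := x - b%:R \in nonunits R.

Lemma residue_is0 : residue_is 0 false.
Proof.
rewrite /residue_is subr0 inE; apply/invertibleP=> -[y].
by rewrite mul0r => /esym/eqP; rewrite oner_eq0.
Qed.

Hypothesis R_even : ~~ odd #|R|.

Lemma two_nonunit : (2 : R) \in nonunits R.
Proof. by rewrite inE invertible2E. Qed.

Lemma residue_is_involution (u : R) : involution u -> residue_is u true.
Proof.
move=> /eqP u2; rewrite /residue_is inE; apply: contra R_even => u1.
have sq : (u - 1) * (u - 1) = 2 * (1 - u).
  by rewrite -expr2 sqrrB u2; ring.
by rewrite -invertible2E (@invertibleMl _ _ (1 - u)) // -sq invertibleM.
Qed.

Lemma residue_isD x y b c :
  residue_is x b -> residue_is y c -> residue_is (x + y) (b (+) c).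
Proof.
rewrite /residue_is => xb yc; have -> : x + y - (b (+) c)%:R
    = (x - b%:R) + (y - c%:R) + (b && c)%:R * 2.
  by case: (b); case: (c) => /=; ring.
by rewrite local_nonunitD ?local_nonunitMl ?two_nonunit // local_nonunitD.
Qed.

End LocalRing.

Section InverseIsomorphism.
Variables (R S : finComNzRingType) (f : {rmorphism R -> S}) (g : S -> R).
Hypotheses (fK : cancel f g) (gK : cancel g f).

HB.instance Definition _ := GRing.isNmodMorphism.Build S R g (can2_nmod_morphism fK gK).
HB.instance Definition _ :=
  GRing.isMonoidMorphism.Build S R g (can2_monoid_morphism fK gK).

Lemma can2_ring_iso : ring_iso S R.
Proof. by exists g; exists f. Qed.

End InverseIsomorphism.

Section PrimeSubring.
Variable S : finComNzRingType.
Local Notation m := (characteristic S).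

Definition natr_Zchar (x : 'Z_m) : S := (x : nat)%:R.

Lemma natr_Zchar_natr n : natr_Zchar n%:R = n%:R.
Proof. by rewrite Zp_nat /natr_Zchar /= Zp_cast ?characteristic_gt1 // natr_mod_char. Qed.

Lemma natr_Zchar_is_nmod_morphism : nmod_morphism natr_Zchar.
Proof.
split=> // x y.
by rewrite -[x]natr_Zp -[y]natr_Zp -natrD !natr_Zchar_natr natrD.
Qed.

Lemma natr_Zchar_is_monoid_morphism : monoid_morphism natr_Zchar.
Proof.
split=> [|x y]; first by rewrite -[1]natr_Zp natr_Zchar_natr.
by rewrite -[x]natr_Zp -[y]natr_Zp -natrM !natr_Zchar_natr natrM.
Qed.

HB.instance Definition _ :=
  GRing.isNmodMorphism.Build 'Z_m S natr_Zchar natr_Zchar_is_nmod_morphism.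
HB.instance Definition _ :=
  GRing.isMonoidMorphism.Build 'Z_m S natr_Zchar natr_Zchar_is_monoid_morphism.

Lemma natr_Zchar_inj : injective natr_Zchar.
Proof.
apply: raddf_inj => x /eqP; rewrite natr_eq0_char => /dvdn_leq char_le_x.
apply/val_inj/eqP; rewrite /= eqn0Ngt; apply/negP => /char_le_x.
by rewrite leqNgt -{2}(Zp_cast (characteristic_gt1 S)) ltn_ord.
Qed.

Lemma natr_Zchar_surj_iso :
  (forall z : S, exists n, z = n%:R) -> ring_iso S 'Z_m.
Proof.
move=> natr_surj; have [|g fK gK] := inj_card_bij natr_Zchar_inj.
  apply: leq_trans (leq_imset_card natr_Zchar 'Z_m); rewrite -cardsT subset_leq_card //.
  by apply/subsetP=> z _; have [n ->] := natr_surj z; rewrite -natr_Zchar_natr imset_f.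
exact: can2_ring_iso fK gK.
Qed.

End PrimeSubring.

Lemma ring_iso_Zp_natr (S : finComNzRingType) q :
  ring_iso S 'Z_q -> forall w : S, exists n, w = n%:R.
Proof.
by case=> f [g fK _] w; exists (f w : nat); apply: (can_inj fK); rewrite rmorph_nat natr_Zp.
Qed.

Lemma odd_local_connected_natr_surj (S : finComNzRingType) :
  local_ring S -> odd #|S| -> gamma_connected S ->
  forall z : S, exists n, z = n%:R.
Proof.
move=> S_local oddS /gamma_connectedP genS z.
pose A := [set natr_Zchar x | x in 'Z_(characteristic S)].
have cA : addr_closed A.
  split=> [|_ _ /imsetP[x _ ->] /imsetP[y _ ->]]; apply/imsetP.
    by exists 0; rewrite ?raddf0.
  by exists (x + y); rewrite ?raddfD.
have invA : involutions S \subset A.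
  apply/subsetP=> u; rewrite inE => /(local_odd_involution S_local oddS) [|] ->.
    by apply/imsetP; exists 1; rewrite ?rmorph1.
  by apply/imsetP; exists (-1); rewrite ?rmorphN1.
have /imsetP[x _ ->] : z \in A by rewrite (genS A cA invA) inE.
by exists x.
Qed.

Lemma odd_local_connected_iso (S : finComNzRingType) :
  local_ring S -> odd #|S| -> gamma_connected S ->
  exists p n : nat, [/\ prime p, odd p, (0 < n)%N & ring_iso S 'Z_(p ^ n)].
Proof.
move=> S_local oddS conS; have char_gt1 := characteristic_gt1 S.
set m := characteristic S in char_gt1; set p := pdiv m.
have p_pr : prime p := pdiv_prime char_gt1.
have mE : m = (p ^ logn p m)%N.
  by rewrite -p_part part_pnat_id //; apply: local_char_pnat.
exists p, (logn p m); split=> //.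
- apply: dvdn_odd oddS; apply: dvdn_trans (pdiv_dvd m) _.
  by rewrite -cardsT order_dvdG ?inE.
- by rewrite logn_gt0 mem_primes p_pr ltnW // pdiv_dvd.
rewrite -mE; apply: natr_Zchar_surj_iso.
exact: odd_local_connected_natr_surj.
Qed.

Section Product.
Variables (R : finComNzRingType) (t : nat) (R_ : 'I_t -> finComNzRingType).
Variable pi : forall i, {rmorphism R -> R_ i}.
Hypothesis R_prod : is_product_via pi.

Lemma pi_inj x y : (forall i, pi i x = pi i y) -> x = y.
Proof. exact: R_prod.1. Qed.

Lemma embed_subproof i (w : R_ i) :
  exists x, [forall k, pi k x == dfwith (fun k => 0 : R_ k) w k].
Proof.
by have [x xE] := R_prod.2 (dfwith (fun k => 0 : R_ k) w); exists x; apply/forallP => k; rewrite xE.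
Qed.

Definition embed i (w : R_ i) : R := xchoose (embed_subproof w).

Lemma pi_embed i j (w : R_ i) : pi j (embed w) = dfwith (fun k => 0 : R_ k) w j.
Proof. exact/eqP/(forallP (xchooseP (embed_subproof w))). Qed.

Lemma pi_embed_id i (w : R_ i) : pi i (embed w) = w.
Proof. by rewrite pi_embed dfwith_in. Qed.

Lemma pi_embed_neq i j (w : R_ i) : i != j -> pi j (embed w) = 0.
Proof. by move=> ij; rewrite pi_embed dfwith_out. Qed.

Lemma embed_is_nmod_morphism i : nmod_morphism (@embed i).
Proof.
split=> [|v w]; apply: pi_inj => k; rewrite ?rmorph0 ?rmorphD.
all: have [<-|ik] := eqVneq i k; rewrite ?pi_embed_id ?pi_embed_neq ?addr0 //.
Qed.

HB.instance Definition _ i :=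
  GRing.isNmodMorphism.Build (R_ i) R (@embed i) (embed_is_nmod_morphism i).

Lemma sum_embed_pi x : \sum_i embed (pi i x) = x.
Proof.
apply: pi_inj => j; rewrite rmorph_sum (bigD1 j) //= pi_embed_id big1 ?addr0 //.
by move=> k kj; rewrite pi_embed_neq // eq_sym.
Qed.

Lemma sum_embed1 : \sum_i embed (1 : R_ i) = 1.
Proof. by rewrite -[RHS]sum_embed_pi; apply: eq_bigr => i _; rewrite rmorph1. Qed.

Lemma involution_embed i (u : R_ i) : involution u -> involution (1 + embed (u - 1)).
Proof.
move=> /eqP u2; apply/eqP/pi_inj => k; rewrite rmorphXn rmorphD !rmorph1.
have [<-|ik] := eqVneq i k; first by rewrite pi_embed_id addrC subrK.
by rewrite pi_embed_neq // addr0 expr1n.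
Qed.

Lemma gamma_connected_factor i : gamma_connected R -> gamma_connected (R_ i).
Proof.
by apply: (gamma_connected_rmorph (f := pi i)) => y; exists (embed y); rewrite pi_embed_id.
Qed.

Section InvolutionClosedSet.
Variable A : {set R}.
Hypotheses (A_closed : addr_closed A) (involutions_sub : involutions R \subset A).

Lemma embed_sub1_in i (u : R_ i) : involution u -> embed (u - 1) \in A.
Proof.
have [_ AD] := A_closed; move=> iu.
have -> : embed (u - 1) = 1 + embed (u - 1) - 1 by rewrite [RHS]addrAC subrr add0r.
by rewrite AD ?addr_closedN // (subsetP involutions_sub) ?inE ?involution_embed ?involution1.
Qed.

(* [embed w] is a multiple of [- embed (-1 - 1)], as 2 is a unit of the cyclic ring [R_ j]. *)
Lemma embed_odd_in j :
  odd #|R_ j| -> (forall w : R_ j, exists n, w = n%:R) -> forall w : R_ j, embed w \in A.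
Proof.
move=> oddj natr_surj w; have [n ->] := natr_surj w.
have [k two_k] : exists k : nat, 2 * k%:R = 1 :> R_ j.
  have /invertibleP[y two_y] : invertible (2 : R_ j) by rewrite invertible2E.
  by have [k yk] := natr_surj y; exists k; rewrite -yk.
have -> : (n%:R : R_ j) = - (-1 - 1) *+ (k * n) by rewrite -[LHS]mul1r -{1}two_k; ring.
rewrite raddfMn raddfN addr_closedMn ?addr_closedN // embed_sub1_in //.
by rewrite involutionN involution1.
Qed.

Lemma embed_connected_in i :
  (forall j, j != i -> embed (1 : R_ j) \in A) -> gamma_connected (R_ i) ->
  forall w : R_ i, embed w \in A.
Proof.
have [A0 AD] := A_closed; move=> embed1_other /gamma_connectedP genRi w.
pose B := [set v : R_ i | embed v \in A].
have cB : addr_closed B by split=> [|u v]; rewrite !inE ?raddf0 // raddfD; apply: AD.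
have embed1 : embed (1 : R_ i) \in A.
  have -> : embed (1 : R_ i) = 1 - \sum_(j | j != i) embed (1 : R_ j).
    by rewrite -sum_embed1 (bigD1 i) //= addrK.
  have A1 : 1 \in A by rewrite (subsetP involutions_sub) ?inE ?involution1.
  rewrite AD ?addr_closedN //.
  by apply: (big_ind (fun x => x \in A)) => // j /embed1_other.
have invB : involutions (R_ i) \subset B.
  by apply/subsetP=> u; rewrite !inE => iu; rewrite -[u](subrK 1) raddfD AD ?embed_sub1_in.
by have /setP/(_ w) := genRi B cB invB; rewrite !inE.
Qed.

End InvolutionClosedSet.

Lemma product_connected :
  (forall i j, ~~ odd #|R_ i| -> ~~ odd #|R_ j| -> i = j) ->
  (forall i, ~~ odd #|R_ i| -> gamma_connected (R_ i)) ->
  (forall j, odd #|R_ j| -> forall w : R_ j, exists n, w = n%:R) ->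
  gamma_connected R.
Proof.
move=> even_uniq even_con odd_natr; apply/gamma_connectedP => A cA invA.
have embed_odd j : odd #|R_ j| -> forall w : R_ j, embed w \in A.
  move=> oddj; exact: (embed_odd_in cA invA oddj (odd_natr j oddj)).
have embed_in i (w : R_ i) : embed w \in A.
  have [oddi | eveni] := boolP (odd #|R_ i|); first exact: embed_odd.
  apply: embed_connected_in => //; last exact: even_con.
  by move=> j ji; apply: embed_odd; apply: contraR ji => /even_uniq/(_ eveni) ->.
apply/setP=> x; rewrite inE -(sum_embed_pi x).
by apply: (big_ind (fun x => x \in A)) => //; case: cA.
Qed.

Hypothesis R_local : forall i, local_ring (R_ i).

(* On the span of the involutions the residues of the i-th and j-th components
   agree, but they differ on [embed 1]. *)
Lemma even_factors_eq i j :
  gamma_connected R -> ~~ odd #|R_ i| -> ~~ odd #|R_ j| -> i = j.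
Proof.
move=> /gamma_connectedP genR evi evj; apply/eqP; apply: contraT => ij.
pose A := [set x | [exists b, residue_is (pi i x) b && residue_is (pi j x) b]].
have cA : addr_closed A.
  split=> [|x y]; rewrite !inE.
    by apply/existsP; exists false; rewrite !rmorph0; apply/andP; split; apply: residue_is0.
  move=> /existsP[b /andP[xi xj]] /existsP[c /andP[yi yj]].
  apply/existsP; exists (b (+) c).
  by rewrite !rmorphD (residue_isD (R_local i) evi) ?(residue_isD (R_local j) evj).
have invA : involutions R \subset A.
  apply/subsetP=> u; rewrite !inE => iu; apply/existsP; exists true.
  by rewrite !residue_is_involution ?rmorph_involution.
move/setP/(_ (embed (1 : R_ i))): (genR A cA invA).
rewrite !inE pi_embed_id pi_embed_neq // => /existsP[[] /andP[]].
  by rewrite /residue_is !inE /= mulr1n sub0r invertibleN1.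
by rewrite /residue_is !inE /= subr0 invertible1.
Qed.

End Product.

Theorem mainTheorem1 (R : finComNzRingType) (t : nat)
    (R_ : 'I_t -> finComNzRingType) (pi : forall i, {rmorphism R -> R_ i}) :
  is_product_via pi ->
  (forall i, local_ring (R_ i)) ->
  (gamma_connected R <->
   [/\ forall i j : 'I_t, ~~ odd #|{: R_ i}| -> ~~ odd #|{: R_ j}| -> i = j,
       forall i : 'I_t, ~~ odd #|{: R_ i}| -> gamma_connected (R_ i)
     & forall j : 'I_t, odd #|{: R_ j}| ->
         exists p n : nat, [/\ prime p, odd p, (0 < n)%N
                             & ring_iso (R_ j) 'Z_(p ^ n)]]).
Proof.
move=> R_prod R_local; split=> [conR | [even_uniq even_con odd_iso]].
  have con_factor := gamma_connected_factor R_prod ^~ conR.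
  split=> [i j | i _ | j oddj]; first exact: even_factors_eq R_prod R_local i j conR.
    exact: con_factor.
  exact: odd_local_connected_iso (R_local j) oddj (con_factor j).
apply: product_connected R_prod even_uniq even_con _ => j oddj.
by have [p [n [_ _ _ /ring_iso_Zp_natr]]] := odd_iso j oddj.
Qed.
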